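(* For every $n\ge1$, $$u_{2n}(a)\,a^{2n}=\sum_{k=0}^\infty(-1)^k\frac{A_k[n]}{a^{2k}},$$ where the series converges absolutely for $|a|>n$.
   Context: The rational functions $u_{2n}(a)$: $(a^2+1)u_2=1$ and for $n\ge2$: $(a^2+n^2)u_{2n}=3u_{2(n-1)}+3\sum_{j_1+j_2=n-1}u_{2j_1}u_{2j_2}+\sum_{j_1+j_2+j_3=n-1}u_{2j_1}u_{2j_2}u_{2j_3}-\sum_{1\le j_1,\,2j_1<n}(n-2j_1)^2u_{2j_1}u_{2(n-j_1)}$, all indices $j_i\ge1$. $A_0(z)$ is the unique function holomorphic near $0$ with $A_0(0)=0$ and $z(1+A_0)^3=A_0$; $(A_k)_{k\ge0}$ is the unique sequence of functions holomorphic in $|z|<4/27$ such that $\sum_kA_k(z)a^{-2k}$ formally solves $a^2(z(1+A)^3-A)=(1+A)\delta_z^2A-(\delta_zA)^2$, $\delta_z=z\,d/dz$. The numbers $A_k[n]$ are defined by $A_k(z)=(-1)^k\sum_{n\ge1}A_k[n]z^n$. *)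

From Stdlib Require Import Reals Arith.
From Coquelicot Require Import Coquelicot.
Open Scope C_scope.
Open Scope bool_scope.

Fixpoint csum (f : nat -> C) (n : nat) : C :=
  match n with
  | O => RtoC 0
  | S m => csum f m + f m
  end.

Definition Cnat (n : nat) : C := RtoC (INR n).

(* One step of the recursion defining u_{2n}(a), n >= 1, given the table
   t j = u_{2j}(a) for 1 <= j <= n-1.  Division by a^2+n^2 (total Cinv). *)
Definition u_step (n : nat) (t : nat -> C) (a : C) : C :=
  if Nat.eqb n 1 then RtoC 1 / (a ^ 2 + RtoC 1)
  else
   (RtoC 3 * t (n - 1)%nat
    + RtoC 3 * csum (fun j1 => csum (fun j2 =>
         if (1 <=? j1) && (1 <=? j2) && Nat.eqb (j1 + j2)%nat (n - 1)%nat
         then t j1 * t j2 else RtoC 0) n) n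
    + csum (fun j1 => csum (fun j2 => csum (fun j3 =>
         if (1 <=? j1) && (1 <=? j2) && (1 <=? j3) && Nat.eqb (j1 + j2 + j3)%nat (n - 1)%nat
         then t j1 * t j2 * t j3 else RtoC 0) n) n) n
    - csum (fun j1 =>
         if (1 <=? j1) && (2 * j1 <? n)%nat
         then Cnat (n - 2 * j1)%nat ^ 2 * t j1 * t (n - j1)%nat else RtoC 0) n)
   / (a ^ 2 + Cnat n ^ 2).

Fixpoint u_table (n : nat) (a : C) : nat -> C :=
  match n with
  | O => fun _ => RtoC 0
  | S m => let t := u_table m a in
           fun j => if j <=? m then t j else u_step (S m) t a
  end.

(* u n a = u_{2n}(a)  (n >= 1) *)
Definition u (n : nat) (a : C) : C := u_table n a n.

(* ---- Bivariate formal power series in (w, z): F k n = coeff of w^k z^n,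
   with w = a^{-2}.  A function A_k(z) holomorphic near 0 is represented
   by its Taylor coefficients (fun n => F k n). ---- *)
Definition bser := nat -> nat -> C.

Definition bone : bser := fun k n => if (Nat.eqb k 0) && (Nat.eqb n 0) then RtoC 1 else RtoC 0.
Definition badd (F G : bser) : bser := fun k n => F k n + G k n.
Definition bsub (F G : bser) : bser := fun k n => F k n - G k n.
Definition bmul (F G : bser) : bser := fun k n =>
  csum (fun i => csum (fun j => F i j * G (k - i)%nat (n - j)%nat) (S n)) (S k).
Definition bz (F : bser) : bser := fun k n => match n with O => RtoC 0 | S m => F k m end.
Definition bw (F : bser) : bser := fun k n => match k with O => RtoC 0 | S m => F m n end.
(* delta_z = z d/dz acting termwise *)
Definition bdelta (F : bser) : bser := fun k n => Cnat n * F k n.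

(* The formal equation a^2 (z(1+A)^3 - A) = (1+A) delta^2 A - (delta A)^2,
   equivalently  z(1+A)^3 - A = w ((1+A) delta^2 A - (delta A)^2),
   read coefficientwise in w = a^{-2} and z. *)
Definition formally_solves (A : bser) : Prop :=
  let A1 := badd bone A in
  bsub (bz (bmul A1 (bmul A1 A1))) A
  = bw (bsub (bmul A1 (bdelta (bdelta A))) (bmul (bdelta A) (bdelta A))).

(* A_k (given by coefficients A k) is holomorphic in |z| < 4/27: its Taylor
   series converges there. *)
Definition holo_disk (A : bser) : Prop :=
  forall k (z : C), (Cmod z < 4 / 27)%R -> ex_series (fun n => A k n * z ^ n).

(* A_k[n], defined by A_k(z) = (-1)^k sum_{n>=1} A_k[n] z^n *)
Definition Akn (A : bser) (k n : nat) : C := (- RtoC 1) ^ k * A k n.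

From Stdlib Require Import Reals Arith Lia Lra Psatz.
From Coquelicot Require Import Coquelicot.
Open Scope C_scope.

(* With w = a^-2, view A as a power series in z whose coefficients are the
   columns k |-> A_k[j].  Since A_k[0] = 0 and delta_z kills constant terms, the
   coefficient of z^(m+1) in the formal equation reads
     A_k[m+1] = R_k - (m+1)^2 A_(k-1)[m+1],
   where R only involves the columns j <= m.  For |a| > m+1 the series
   sum_k A_k[m+1] w^k therefore converges absolutely, to (1 + (m+1)^2 w)^-1 times
   the sum of R, which the Cauchy product formula computes from the sums S_j of
   the lower columns.  After symmetrising the quadratic term under
   j <-> m+1-j, the resulting recursion for S_j is exactly the one defining
   u_(2j)(a) a^(2j). *)

(** * Finite sums *)

Lemma csum_ext (f g : nat -> C) N : (forall j, (j < N)%nat -> f j = g j) -> csum f N = csum g N.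
Proof.
  induction N; intro H; simpl; [easy|].
  rewrite IHN, (H N) by (lia || (intros; apply H; lia)); easy.
Qed.

Lemma csum_add (f g : nat -> C) N : csum (fun j => f j + g j) N = csum f N + csum g N.
Proof. induction N; simpl; [ring | rewrite IHN; ring]. Qed.

Lemma csum_sub (f g : nat -> C) N : csum (fun j => f j - g j) N = csum f N - csum g N.
Proof. induction N; simpl; [ring | rewrite IHN; ring]. Qed.

Lemma csum_mult_l (c : C) (f : nat -> C) N : csum (fun j => c * f j) N = c * csum f N.
Proof. induction N; simpl; [ring | rewrite IHN; ring]. Qed.

Lemma csum_const0 N : csum (fun _ => 0) N = 0.
Proof. induction N; simpl; [easy | rewrite IHN; ring]. Qed.

Lemma csum_eq0 (f : nat -> C) N : (forall j, (j < N)%nat -> f j = 0) -> csum f N = 0.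
Proof. intro H. rewrite (csum_ext _ (fun _ => 0)) by exact H. apply csum_const0. Qed.

Lemma csum_S (f : nat -> C) N : csum f (S N) = csum f N + f N.
Proof. reflexivity. Qed.

Lemma csum_Sl (f : nat -> C) N : csum f (S N) = f 0%nat + csum (fun j => f (S j)) N.
Proof.
  induction N as [|N IHN]; [simpl; ring|].
  rewrite csum_S, IHN, csum_S. ring.
Qed.

Lemma csum_swap (F : nat -> nat -> C) N M :
  csum (fun i => csum (F i) M) N = csum (fun j => csum (fun i => F i j) N) M.
Proof. induction N; simpl; [now rewrite csum_const0 | rewrite IHN, <- csum_add; easy]. Qed.

Lemma csum_rev (f : nat -> C) N : csum (fun j => f (N - j)%nat) (S N) = csum f (S N).
Proof.
  induction N; [easy|].
  rewrite csum_Sl, Nat.sub_0_r, (csum_S f (S N)), <- IHN. apply Cplus_comm.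
Qed.

Lemma csum_single (h : nat -> C) c N :
  csum (fun j => if Nat.eqb j c then h j else 0) N = if Nat.ltb c N then h c else 0.
Proof.
  induction N; simpl; [easy|]. rewrite IHN.
  destruct (Nat.eqb_spec N c), (Nat.ltb_spec c N), (Nat.ltb_spec c (S N));
    subst; try lia; ring.
Qed.

Lemma csum_trunc (h : nat -> C) M N : (M <= N)%nat ->
  csum (fun j => if Nat.ltb j M then h j else 0) N = csum h M.
Proof.
  induction N as [|N IHN]; intro HM; [now replace M with 0%nat by lia|].
  destruct (Nat.eq_dec M (S N)) as [->|HMN].
  - apply csum_ext. intros j Hj. now destruct (Nat.ltb_spec j (S N)); [|lia].
  - simpl. rewrite IHN by lia. destruct (Nat.ltb_spec N M); [lia | ring].
Qed.

Lemma csum_antidiag (g : nat -> nat -> C) m N : (m < N)%nat ->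
  csum (fun j1 => csum (fun j2 => if Nat.eqb (j1 + j2) m then g j1 j2 else 0) N) N
  = csum (fun j => g j (m - j)%nat) (S m).
Proof.
  intro HN. rewrite <- (csum_trunc _ (S m) N) by lia. apply csum_ext. intros j1 _.
  rewrite (csum_ext _ (fun j2 => if Nat.eqb j2 (m - j1) then
                                   (if Nat.ltb j1 (S m) then g j1 j2 else 0) else 0)).
  - rewrite csum_single. destruct (Nat.ltb_spec (m - j1) N); [easy | lia].
  - intros j2 _. destruct (Nat.eqb_spec (j1 + j2) m), (Nat.eqb_spec j2 (m - j1)),
      (Nat.ltb_spec j1 (S m)); subst; try lia; easy.
Qed.

Lemma csum_symmetric_half (f : nat -> C) N :
  (forall j, (j <= N)%nat -> f (N - j)%nat = f j) -> (forall j, (2 * j)%nat = N -> f j = 0) ->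
  csum f (S N) = 2 * csum (fun j => if Nat.ltb (2 * j) N then f j else 0) (S N).
Proof.
  intros Hsym Hmid.
  set (lo := fun j => if Nat.ltb (2 * j) N then f j else 0).
  transitivity (csum lo (S N) + csum (fun j => lo (N - j)%nat) (S N)).
  - rewrite <- csum_add. apply csum_ext. intros j Hj. unfold lo.
    destruct (Nat.ltb_spec (2 * j) N), (Nat.ltb_spec (2 * (N - j)) N); try lia.
    + ring.
    + rewrite Hsym by lia. ring.
    + rewrite Hmid by lia. ring.
  - rewrite csum_rev. ring.
Qed.

(** * Absolutely convergent complex series *)

Lemma Re_sum_n (a : nat -> C) N : Re (sum_n a N) = sum_n (fun k => Re (a k)) N.
Proof. induction N; [rewrite !sum_O | rewrite !sum_Sn, <- IHN]; reflexivity. Qed.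

Lemma Im_sum_n (a : nat -> C) N : Im (sum_n a N) = sum_n (fun k => Im (a k)) N.
Proof. induction N; [rewrite !sum_O | rewrite !sum_Sn, <- IHN]; reflexivity. Qed.

Lemma is_series_C_iff (a : nat -> C) (l : C) :
  is_series a l <->
  is_series (fun n => Re (a n)) (Re l) /\ is_series (fun n => Im (a n)) (Im l).
Proof.
  unfold is_series. split.
  - intro H. split; apply filterlim_locally; intro eps;
      generalize (proj1 (filterlim_locally _ _) H eps); apply filter_imp; intros N [h1 h2];
      [rewrite <- Re_sum_n | rewrite <- Im_sum_n]; assumption.
  - intros [H1 H2]. apply filterlim_locally. intro eps.
    generalize (filter_and _ _ (proj1 (filterlim_locally _ _) H1 eps)
                               (proj1 (filterlim_locally _ _) H2 eps)).
    apply filter_imp. intros N [h1 h2].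
    split; [rewrite Re_sum_n | rewrite Im_sum_n]; assumption.
Qed.

Lemma is_series_C_unique (a : nat -> C) (l l' : C) : is_series a l -> is_series a l' -> l = l'.
Proof. apply filterlim_locally_unique. Qed.

Lemma ex_series_C_Cmod (a : nat -> C) : ex_series (fun n => Cmod (a n)) -> ex_series a.
Proof. apply (ex_series_le (V := C_CompleteNormedModule)). intro n. apply Rle_refl. Qed.

Lemma im_le_Cmod (c : C) : (Rabs (Im c) <= Cmod c)%R.
Proof. exact (Rle_trans _ _ _ (Rmax_r _ _) (Rmax_Cmod c)). Qed.

Lemma ex_series_Rabs_of_Cmod (a : nat -> C) (f : C -> R) :
  (forall c, Rabs (f c) <= Cmod c)%R ->
  ex_series (fun n => Cmod (a n)) -> ex_series (fun n => Rabs (f (a n))).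
Proof.
  intro Hf. apply (ex_series_le (V := R_CompleteNormedModule)). intro n.
  unfold norm; simpl. rewrite Rabs_Rabsolu. apply Hf.
Qed.

Lemma Re_csum (f : nat -> C) n : Re (csum f (S n)) = sum_f_R0 (fun k => Re (f k)) n.
Proof. induction n; [unfold Re; simpl; ring | simpl sum_f_R0; rewrite <- IHn; easy]. Qed.

Lemma Im_csum (f : nat -> C) n : Im (csum f (S n)) = sum_f_R0 (fun k => Im (f k)) n.
Proof. induction n; [unfold Im; simpl; ring | simpl sum_f_R0; rewrite <- IHn; easy]. Qed.

Lemma Cmod_csum_le (f : nat -> C) n :
  (Cmod (csum f (S n)) <= sum_f_R0 (fun k => Cmod (f k)) n)%R.
Proof.
  induction n; simpl; [rewrite Cplus_0_l; lra|].
  eapply Rle_trans; [apply Cmod_triangle | simpl in IHn; lra].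
Qed.

Lemma is_series_C_mult (a b : nat -> C) (la lb : C) :
  ex_series (fun n => Cmod (a n)) -> ex_series (fun n => Cmod (b n)) ->
  is_series a la -> is_series b lb ->
  is_series (fun n => csum (fun k => a k * b (n - k)%nat) (S n)) (la * lb).
Proof.
  intros Ea Eb [Ha1 Ha2]%is_series_C_iff [Hb1 Hb2]%is_series_C_iff.
  pose proof (ex_series_Rabs_of_Cmod a Re re_le_Cmod Ea) as Ra1.
  pose proof (ex_series_Rabs_of_Cmod a Im im_le_Cmod Ea) as Ra2.
  pose proof (ex_series_Rabs_of_Cmod b Re re_le_Cmod Eb) as Rb1.
  pose proof (ex_series_Rabs_of_Cmod b Im im_le_Cmod Eb) as Rb2.
  apply is_series_C_iff. split.
  - eapply is_series_ext; [|exact (is_series_minus _ _ _ _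
        (is_series_mult _ _ _ _ Ha1 Hb1 Ra1 Rb1) (is_series_mult _ _ _ _ Ha2 Hb2 Ra2 Rb2))].
    intro n. rewrite Re_csum. symmetry. apply minus_sum.
  - eapply is_series_ext; [|exact (is_series_plus _ _ _ _
        (is_series_mult _ _ _ _ Ha1 Hb2 Ra1 Rb2) (is_series_mult _ _ _ _ Ha2 Hb1 Ra2 Rb1))].
    intro n. rewrite Im_csum. symmetry. apply plus_sum.
Qed.

Lemma ex_series_Cmod_mult (a b : nat -> C) :
  ex_series (fun n => Cmod (a n)) -> ex_series (fun n => Cmod (b n)) ->
  ex_series (fun n => Cmod (csum (fun k => a k * b (n - k)%nat) (S n))).
Proof.
  intros [la Ha] [lb Hb].
  pose proof (is_series_mult_pos _ _ _ _ Ha Hb (fun n => Cmod_ge_0 _) (fun n => Cmod_ge_0 _)) as M.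
  apply (ex_series_le (V := R_CompleteNormedModule)) with (2 := ex_intro _ _ M).
  intro n. unfold norm; simpl. rewrite Rabs_pos_eq by apply Cmod_ge_0.
  eapply Rle_trans; [apply Cmod_csum_le|].
  right. apply sum_eq. intros. apply Cmod_mult.
Qed.

Lemma is_series_C_geom (q : C) : (Cmod q < 1)%R ->
  ex_series (fun k => Cmod (q ^ k)) /\ is_series (fun k => q ^ k) (/ (1 - q)).
Proof.
  intro Hq.
  assert (E : ex_series (fun k => Cmod (q ^ k))).
  { eapply ex_series_ext; [|apply (ex_series_geom (Cmod q))].
    - intro n. symmetry. apply Cmod_pow.
    - rewrite Rabs_pos_eq by apply Cmod_ge_0. exact Hq. }
  split; [exact E|].
  destruct (ex_series_C_Cmod _ E) as [l Hl]. change C in l.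
  assert (Hshift : l - 1 = q * l).
  { apply (is_series_C_unique (fun k => q ^ S k)).
    - apply is_series_incr_1.
      match goal with |- is_series _ ?v => replace v with l; [exact Hl|] end.
      change (l = l - 1 + 1). ring.
    - exact (is_series_scal (V := C_NormedModule) q _ _ Hl). }
  assert (Hq1 : 1 - q <> 0).
  { intro H. apply (Rlt_irrefl 1). rewrite <- Cmod_1 at 1.
    replace (RtoC 1) with q; [exact Hq|]. rewrite <- (Cplus_0_l q), <- H. ring. }
  assert (Hl1 : l = / (1 - q)).
  { transitivity ((l - q * l) / (1 - q)); [field; exact Hq1|].
    rewrite <- Hshift. field. exact Hq1. }
  rewrite <- Hl1. exact Hl.
Qed.

(** * Generating series in w *)

Definition is_gseries (w : C) (f : nat -> C) (s : C) : Prop :=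
  ex_series (fun k => Cmod (f k * w ^ k)) /\ is_series (fun k => f k * w ^ k) s.

Definition conv (f g : nat -> C) (k : nat) : C := csum (fun i => f i * g (k - i)%nat) (S k).

Definition shift (f : nat -> C) (k : nat) : C := match k with O => 0 | S k' => f k' end.

Definition delta0 (k : nat) : C := if Nat.eqb k 0 then 1 else 0.

Section GenSeries.
Variable w : C.

Lemma is_gseries_ext (f g : nat -> C) (s : C) :
  (forall k, f k = g k) -> is_gseries w f s -> is_gseries w g s.
Proof.
  intros H [H1 H2]. split.
  - eapply ex_series_ext; [|exact H1]. intro k. simpl. now rewrite H.
  - eapply is_series_ext; [|exact H2]. intro k. simpl. now rewrite H.
Qed.

Lemma is_gseries_eq (f : nat -> C) (s s' : C) : is_gseries w f s -> s = s' -> is_gseries w f s'.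
Proof. now intros H <-. Qed.

Lemma is_gseries_plus (f g : nat -> C) (s t : C) :
  is_gseries w f s -> is_gseries w g t -> is_gseries w (fun k => f k + g k) (s + t).
Proof.
  intros [F1 F2] [G1 G2]. split.
  - apply (ex_series_le (V := R_CompleteNormedModule)) with (2 := ex_series_plus _ _ F1 G1).
    intro k. unfold norm; simpl. rewrite Rabs_pos_eq by apply Cmod_ge_0.
    rewrite Cmult_plus_distr_r. apply Cmod_triangle.
  - eapply is_series_ext; [|exact (is_series_plus _ _ _ _ F2 G2)].
    intro k. change (f k * w ^ k + g k * w ^ k = (f k + g k) * w ^ k). ring.
Qed.

Lemma is_gseries_scal (c : C) (f : nat -> C) (s : C) :
  is_gseries w f s -> is_gseries w (fun k => c * f k) (c * s).
Proof.
  intros [F1 F2]. split.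
  - eapply ex_series_ext; [|exact (ex_series_scal_l (K := R_AbsRing) (Cmod c) _ F1)].
    intro k. change (Cmod c * Cmod (f k * w ^ k) = Cmod (c * f k * w ^ k))%R.
    rewrite <- Cmod_mult, Cmult_assoc. easy.
  - eapply is_series_ext; [|exact (is_series_scal (V := C_NormedModule) c _ _ F2)].
    intro k. change (c * (f k * w ^ k) = c * f k * w ^ k). ring.
Qed.

Lemma is_gseries_minus (f g : nat -> C) (s t : C) :
  is_gseries w f s -> is_gseries w g t -> is_gseries w (fun k => f k - g k) (s - t).
Proof.
  intros F G. pose proof (is_gseries_plus _ _ _ _ F (is_gseries_scal (-1) _ _ G)) as H.
  eapply is_gseries_eq; [eapply is_gseries_ext; [|exact H]|]; intros; simpl; ring.
Qed.

Lemma is_gseries_geom (c : C) :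
  (Cmod (c * w) < 1)%R -> is_gseries w (fun k => c ^ k) (/ (1 - c * w)).
Proof.
  intro H. destruct (is_series_C_geom _ H) as [H1 H2]. split.
  - eapply ex_series_ext; [|exact H1]. intro k. simpl. now rewrite Cpow_mult_l.
  - eapply is_series_ext; [|exact H2]. intro k. simpl. now rewrite Cpow_mult_l.
Qed.

Lemma is_gseries_delta0 : is_gseries w delta0 1.
Proof.
  assert (H0 : (Cmod (0 * w) < 1)%R) by (rewrite Cmult_0_l, Cmod_0; lra).
  eapply is_gseries_eq; [eapply is_gseries_ext; [|exact (is_gseries_geom 0 H0)]|].
  - intros [|k]; unfold delta0; simpl; ring.
  - field.
Qed.

Lemma is_gseries_zero : is_gseries w (fun _ => 0) 0.
Proof.
  pose proof (is_gseries_scal 0 _ _ is_gseries_delta0) as H.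
  eapply is_gseries_eq; [eapply is_gseries_ext; [|exact H]|]; intros; simpl; ring.
Qed.

Lemma is_gseries_csum (F : nat -> nat -> C) (s : nat -> C) (N : nat) :
  (forall j, (j < N)%nat -> is_gseries w (F j) (s j)) ->
  is_gseries w (fun k => csum (fun j => F j k) N) (csum s N).
Proof.
  induction N; intro H; [apply is_gseries_zero|].
  apply (is_gseries_plus (fun k => csum (fun j => F j k) N) (F N)); auto.
Qed.

Lemma is_gseries_conv (f g : nat -> C) (s t : C) :
  is_gseries w f s -> is_gseries w g t -> is_gseries w (conv f g) (s * t).
Proof.
  intros [F1 F2] [G1 G2].
  assert (E : forall k, conv f g k * w ^ k =
     csum (fun i => (f i * w ^ i) * (g (k - i)%nat * w ^ (k - i)%nat)) (S k)).
  { intro k. unfold conv. rewrite Cmult_comm, <- csum_mult_l. apply csum_ext. intros i Hi.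
    replace k with (i + (k - i))%nat at 1 by lia. rewrite Cpow_add_r. ring. }
  split.
  - eapply ex_series_ext; [|exact (ex_series_Cmod_mult _ _ F1 G1)].
    intro k. simpl. now rewrite E.
  - eapply is_series_ext; [|exact (is_series_C_mult _ _ _ _ F1 G1 F2 G2)].
    intro k. simpl. now rewrite E.
Qed.

Lemma is_gseries_shift (f : nat -> C) (s : C) : is_gseries w f s -> is_gseries w (shift f) (w * s).
Proof.
  intros [F1 F2]. split.
  - apply ex_series_incr_1. simpl.
    eapply ex_series_ext; [|exact (ex_series_scal_l (K := R_AbsRing) (Cmod w) _ F1)].
    intro k. change (Cmod w * Cmod (f k * w ^ k) = Cmod (f k * (w * w ^ k)))%R.
    rewrite <- Cmod_mult. f_equal. ring.
  - apply is_series_decr_1. simpl.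
    match goal with |- is_series _ ?v => replace v with (w * s) end.
    + eapply is_series_ext; [|exact (is_series_scal (V := C_NormedModule) w _ _ F2)].
      intro k. change (w * (f k * w ^ k) = f k * (w * w ^ k)). ring.
    + change (w * s = w * s + - (0 * 1)). ring.
Qed.

Lemma is_gseries_affine_rec (c : C) (g f : nat -> C) (r : C) :
  (Cmod (c * w) < 1)%R -> is_gseries w g r ->
  (forall k, f k = g k + c * shift f k) -> is_gseries w f (/ (1 - c * w) * r).
Proof.
  intros Hc Hg Hf.
  apply (is_gseries_ext (conv (fun k => c ^ k) g));
    [|exact (is_gseries_conv _ _ _ _ (is_gseries_geom c Hc) Hg)].
  intro k. induction k as [|k IHk]; rewrite Hf; [unfold conv; simpl; ring|].
  change (shift f (S k)) with (f k). rewrite <- IHk. unfold conv.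
  rewrite csum_Sl, Nat.sub_0_r, <- csum_mult_l. f_equal; [ring|].
  apply csum_ext. intros j _. simpl. ring.
Qed.
End GenSeries.

Lemma conv_ext_r (f g g' : nat -> C) k :
  (forall j, (j <= k)%nat -> g j = g' j) -> conv f g k = conv f g' k.
Proof. intro H. apply csum_ext. intros j Hj. rewrite H by lia. easy. Qed.

Lemma conv_plus_l (f g h : nat -> C) k : conv (fun j => f j + g j) h k = conv f h k + conv g h k.
Proof. unfold conv. rewrite <- csum_add. apply csum_ext. intros. ring. Qed.

Lemma conv_plus_r (f g h : nat -> C) k : conv h (fun j => f j + g j) k = conv h f k + conv h g k.
Proof. unfold conv. rewrite <- csum_add. apply csum_ext. intros. ring. Qed.

Lemma conv_scal_r (c : C) (f g : nat -> C) k : conv f (fun j => c * g j) k = c * conv f g k.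
Proof. unfold conv. rewrite <- csum_mult_l. apply csum_ext. intros. ring. Qed.

Lemma conv_delta0_l (g : nat -> C) k : conv delta0 g k = g k.
Proof.
  unfold conv. rewrite csum_Sl, csum_eq0, Nat.sub_0_r; [unfold delta0; simpl; ring|].
  intros j _. unfold delta0. simpl. ring.
Qed.

Lemma conv_delta0_r (f : nat -> C) k : conv f delta0 k = f k.
Proof.
  unfold conv. simpl csum. rewrite Nat.sub_diag, csum_eq0; [unfold delta0; simpl; ring|].
  intros j Hj. unfold delta0. destruct (Nat.eqb_spec (k - j) 0); [lia | ring].
Qed.

(** * The column recursion *)

Definition col (F : bser) (j : nat) : nat -> C := fun k => F k j.

Lemma bmul_col (F G : bser) k n :
  bmul F G k n = csum (fun j => conv (col F j) (col G (n - j)) k) (S n).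
Proof. apply csum_swap. Qed.

Lemma bmul_plus_l (F G H : bser) k n : bmul (badd F G) H k n = bmul F H k n + bmul G H k n.
Proof.
  unfold bmul, badd. rewrite <- csum_add. apply csum_ext. intros i _.
  rewrite <- csum_add. apply csum_ext. intros. ring.
Qed.

Lemma bmul_bone_l (G : bser) k n : bmul bone G k n = G k n.
Proof.
  rewrite bmul_col, csum_Sl, Nat.sub_0_r, csum_eq0.
  - rewrite Cplus_0_r. transitivity (conv delta0 (col G n) k); [|exact (conv_delta0_l (col G n) k)].
    apply csum_ext. intros i _. unfold col, bone, delta0. now rewrite Bool.andb_true_r.
  - intros j _. unfold conv. apply csum_eq0. intros i _. unfold col, bone.
    rewrite Bool.andb_false_r. ring.
Qed.

Lemma bmul_succ_col0 (F G : bser) k m : (forall i, F i 0%nat = 0) -> (forall i, G i 0%nat = 0) ->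
  bmul F G k (S m) = csum (fun j => conv (col F (S j)) (col G (m - j)) k) m.
Proof.
  intros HF HG. rewrite bmul_col, csum_Sl.
  change (csum _ (S m)) with
    (csum (fun j => conv (col F (S j)) (col G (m - j)) k) m + conv (col F (S m)) (col G (m - m)) k).
  assert (Hl : conv (col F 0) (col G (S m - 0)) k = 0)
    by (apply csum_eq0; intros i _; unfold col; rewrite HF; ring).
  assert (Hr : conv (col F (S m)) (col G (m - m)) k = 0)
    by (apply csum_eq0; intros i _; unfold col; rewrite Nat.sub_diag, HG; ring).
  rewrite Hl, Hr. ring.
Qed.

Section ColumnSums.
Variable w : C.

Lemma is_gseries_bmul (F G : bser) (sF sG : nat -> C) n :
  (forall j, (j <= n)%nat -> is_gseries w (col F j) (sF j)) ->
  (forall j, (j <= n)%nat -> is_gseries w (col G j) (sG j)) ->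
  is_gseries w (col (bmul F G) n) (conv sF sG n).
Proof.
  intros HF HG. eapply is_gseries_ext; [intro k; symmetry; apply bmul_col|].
  apply (is_gseries_csum w (fun j k => conv (col F j) (col G (n - j)) k)).
  intros j Hj. apply is_gseries_conv; [apply HF | apply HG]; lia.
Qed.

Lemma is_gseries_bmul_succ (F G : bser) (sF sG : nat -> C) m :
  (forall i, F i 0%nat = 0) -> (forall i, G i 0%nat = 0) -> sF 0%nat = 0 -> sG 0%nat = 0 ->
  (forall j, (1 <= j <= m)%nat -> is_gseries w (col F j) (sF j)) ->
  (forall j, (1 <= j <= m)%nat -> is_gseries w (col G j) (sG j)) ->
  is_gseries w (col (bmul F G) (S m)) (conv sF sG (S m)).
Proof.
  intros HF0 HG0 HsF0 HsG0 HF HG.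
  eapply is_gseries_ext; [intro k; symmetry; apply bmul_succ_col0; assumption|].
  eapply is_gseries_eq.
  - apply (is_gseries_csum w (fun j k => conv (col F (S j)) (col G (m - j)) k)).
    intros j Hj. apply is_gseries_conv; [apply HF | apply HG]; lia.
  - unfold conv. rewrite csum_Sl, HsF0. simpl csum. rewrite Nat.sub_diag, HsG0. ring.
Qed.
End ColumnSums.

Definition sdelta (s : nat -> C) (j : nat) : C := Cnat j * s j.

Lemma bdelta_col0 (F : bser) i : bdelta F i 0%nat = 0.
Proof. unfold bdelta, Cnat. simpl. ring. Qed.

Lemma sdelta_0 (s : nat -> C) : sdelta s 0%nat = 0.
Proof. unfold sdelta, Cnat. simpl. ring. Qed.

Lemma bmul_col0 (F G : bser) k : (forall i, G i 0%nat = 0) -> bmul F G k 0%nat = 0.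
Proof.
  intro HG. rewrite bmul_col. simpl. rewrite Cplus_0_l.
  apply csum_eq0. intros i _. unfold col. rewrite HG. ring.
Qed.

Lemma is_gseries_col_bone (w : C) (j : nat) : is_gseries w (col bone j) (delta0 j).
Proof.
  destruct j as [|j].
  - eapply is_gseries_ext; [|apply is_gseries_delta0]. intros [|k]; easy.
  - eapply is_gseries_ext; [|apply is_gseries_zero]. intro k.
    unfold col, bone. now rewrite Bool.andb_false_r.
Qed.

Lemma is_gseries_col_bdelta (w : C) (F : bser) (j : nat) (t : C) :
  is_gseries w (col F j) t -> is_gseries w (col (bdelta F) j) (Cnat j * t).
Proof. apply is_gseries_scal. Qed.

(* The sum of column [m+1] of [A], given the sums [s j] of its columns [j <= m]. *)
Definition col_sum_next (w : C) (m : nat) (s : nat -> C) : C :=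
  let s1 j := delta0 j + s j in
  / (1 + Cnat (S m) ^ 2 * w) *
  (conv s1 (conv s1 s1) m
   - w * (conv s (sdelta (sdelta s)) (S m) - conv (sdelta s) (sdelta s) (S m))).

Section FormalSolution.
Variable A : bser.
Hypothesis HA : formally_solves A.

Local Notation A1 := (badd bone A).

Lemma formally_solves_at k n :
  bz (bmul A1 (bmul A1 A1)) k n - A k n =
  bw (bsub (bmul A1 (bdelta (bdelta A))) (bmul (bdelta A) (bdelta A))) k n.
Proof. exact (f_equal (fun F => F k n) HA). Qed.

Lemma formal_solution_col0 k : A k 0%nat = 0.
Proof.
  pose proof (formally_solves_at k 0) as E. unfold bz, bw, bsub in E.
  replace (A k 0%nat) with (- (0 - A k 0%nat)) by ring. rewrite E.
  destruct k; simpl; [ring|].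
  rewrite !bmul_col0 by apply bdelta_col0. ring.
Qed.

Lemma formal_solution_col_succ m k :
  A k (S m) =
  (bmul A1 (bmul A1 A1) k m
   - shift (fun k' => bmul A (bdelta (bdelta A)) k' (S m) - bmul (bdelta A) (bdelta A) k' (S m)) k)
  + (- Cnat (S m) ^ 2) * shift (col A (S m)) k.
Proof.
  pose proof (formally_solves_at k (S m)) as E. unfold bz, bw, bsub in E.
  replace (A k (S m)) with (bmul A1 (bmul A1 A1) k m - (bmul A1 (bmul A1 A1) k m - A k (S m)))
    by ring.
  rewrite E. destruct k as [|k]; simpl; [ring|].
  rewrite (bmul_plus_l bone A (bdelta (bdelta A))), bmul_bone_l. unfold col, bdelta at 1 2. ring.
Qed.

Lemma is_gseries_col_succ (w : C) (m : nat) (s : nat -> C) :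
  s 0%nat = 0 -> (Cmod (Cnat (S m) ^ 2 * w) < 1)%R ->
  (forall j, (1 <= j <= m)%nat -> is_gseries w (col A j) (s j)) ->
  is_gseries w (col A (S m)) (col_sum_next w m s).
Proof.
  intros Hs0 Hw Hs.
  assert (HA1 : forall j, (j <= m)%nat -> is_gseries w (col A1 j) (delta0 j + s j)).
  { intros j Hj. apply (is_gseries_plus w (col bone j) (col A j)); [apply is_gseries_col_bone|].
    destruct j as [|j]; [|apply Hs; lia]. rewrite Hs0.
    eapply is_gseries_ext; [|apply is_gseries_zero].
    intro k. symmetry. apply formal_solution_col0. }
  assert (HDA : forall j, (1 <= j <= m)%nat -> is_gseries w (col (bdelta A) j) (sdelta s j))
    by (intros; apply is_gseries_col_bdelta, Hs; lia).
  assert (HDDA : forall j, (1 <= j <= m)%nat ->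
                   is_gseries w (col (bdelta (bdelta A)) j) (sdelta (sdelta s) j))
    by (intros; apply is_gseries_col_bdelta, HDA; lia).
  assert (HA1sq : forall j, (j <= m)%nat -> is_gseries w (col (bmul A1 A1) j)
                     (conv (fun i => delta0 i + s i) (fun i => delta0 i + s i) j))
    by (intros; apply is_gseries_bmul; intros; apply HA1; lia).
  pose proof (is_gseries_bmul w _ _ _ _ m HA1 HA1sq) as Hcube.
  pose proof (is_gseries_bmul_succ w _ _ _ _ m formal_solution_col0 (bdelta_col0 _) Hs0
    (sdelta_0 _) Hs HDDA) as H1.
  pose proof (is_gseries_bmul_succ w _ _ _ _ m (bdelta_col0 _) (bdelta_col0 _) (sdelta_0 _)
    (sdelta_0 _) HDA HDA) as H2.
  eapply is_gseries_eq.
  - eapply (is_gseries_affine_rec w (- Cnat (S m) ^ 2)).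
    + replace (- Cnat (S m) ^ 2 * w) with (- (Cnat (S m) ^ 2 * w)) by ring.
      now rewrite Cmod_opp.
    + exact (is_gseries_minus w _ _ _ _ Hcube
               (is_gseries_shift w _ _ (is_gseries_minus w _ _ _ _ H1 H2))).
    + intro k. apply formal_solution_col_succ.
  - unfold col_sum_next. f_equal. f_equal. ring.
Qed.
End FormalSolution.

(** * The recursion defining u *)

Definition pair_sum (t : nat -> C) (N m : nat) : C :=
  csum (fun j1 => csum (fun j2 =>
    if (1 <=? j1) && (1 <=? j2) && Nat.eqb (j1 + j2) m then t j1 * t j2 else 0) N) N.

Definition triple_sum (t : nat -> C) (N m : nat) : C :=
  csum (fun j1 => csum (fun j2 => csum (fun j3 =>
    if (1 <=? j1) && (1 <=? j2) && (1 <=? j3) && Nat.eqb (j1 + j2 + j3) m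
    then t j1 * t j2 * t j3 else 0) N) N) N.

Definition defect_sum (t : nat -> C) (n : nat) : C :=
  csum (fun j =>
    if (1 <=? j) && (2 * j <? n)%nat then Cnat (n - 2 * j) ^ 2 * t j * t (n - j)%nat else 0) n.

Lemma u_step_unfold n t a : u_step n t a =
  if Nat.eqb n 1 then 1 / (a ^ 2 + 1)
  else (3 * t (n - 1)%nat + 3 * pair_sum t n (n - 1) + triple_sum t n (n - 1) - defect_sum t n)
       / (a ^ 2 + Cnat n ^ 2).
Proof. reflexivity. Qed.

Section ScaledSums.
Variables (x : C) (t s : nat -> C) (M : nat).
Hypothesis Hs0 : s 0%nat = 0.
Hypothesis Hst : forall j, (1 <= j <= M)%nat -> s j = t j * x ^ j.

Lemma pair_term_scaled m j1 j2 : (m <= M)%nat ->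
  x ^ m * (if (1 <=? j1) && (1 <=? j2) && Nat.eqb (j1 + j2) m then t j1 * t j2 else 0)
  = if Nat.eqb (j1 + j2) m then s j1 * s j2 else 0.
Proof.
  intro Hm. destruct (Nat.eqb_spec (j1 + j2) m) as [<-|]; [|rewrite Bool.andb_false_r; ring].
  rewrite Bool.andb_true_r.
  destruct j1 as [|j1]; [simpl; rewrite Hs0; ring|].
  destruct j2 as [|j2]; [simpl; rewrite Hs0; ring|].
  rewrite Cpow_add_r, !Hst by lia. simpl. ring.
Qed.

Lemma pair_sum_scaled N m : (m <= M)%nat -> (m < N)%nat -> x ^ m * pair_sum t N m = conv s s m.
Proof.
  intros Hm HN. unfold pair_sum, conv. rewrite <- csum_mult_l.
  rewrite <- (csum_antidiag (fun j1 j2 => s j1 * s j2) m N HN).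
  apply csum_ext. intros j1 _. rewrite <- csum_mult_l.
  apply csum_ext. intros j2 _. now apply pair_term_scaled.
Qed.

Lemma triple_term_scaled m j1 j2 j3 : (j1 <= m <= M)%nat ->
  x ^ m * (if (1 <=? j1) && (1 <=? j2) && (1 <=? j3) && Nat.eqb (j1 + j2 + j3) m
           then t j1 * t j2 * t j3 else 0)
  = s j1 * (x ^ (m - j1) * (if (1 <=? j2) && (1 <=? j3) && Nat.eqb (j2 + j3) (m - j1)
                            then t j2 * t j3 else 0)).
Proof.
  intro Hm. destruct j1 as [|j1]; [simpl; rewrite Hs0; ring|].
  rewrite Hst by lia. replace (x ^ m) with (x ^ S j1 * x ^ (m - S j1))
    by (rewrite <- Cpow_add_r; f_equal; lia).
  replace (Nat.eqb (S j1 + j2 + j3) m) with (Nat.eqb (j2 + j3) (m - S j1))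
    by (destruct (Nat.eqb_spec (j2 + j3) (m - S j1)), (Nat.eqb_spec (S j1 + j2 + j3) m);
        easy || lia).
  simpl. destruct (_ && _ && _); ring.
Qed.

Lemma triple_sum_scaled m : (m <= M)%nat -> x ^ m * triple_sum t (S m) m = conv s (conv s s) m.
Proof.
  intro Hm. unfold triple_sum, conv at 1. rewrite <- csum_mult_l. apply csum_ext. intros j1 Hj1.
  rewrite <- (pair_sum_scaled (S m) (m - j1)) by lia. unfold pair_sum.
  rewrite <- !csum_mult_l. apply csum_ext. intros j2 _.
  rewrite <- !csum_mult_l. apply csum_ext. intros j3 _.
  apply triple_term_scaled. lia.
Qed.
End ScaledSums.

Lemma Cnat_sub a b : (b <= a)%nat -> Cnat (a - b) = Cnat a - Cnat b.
Proof. intro H. unfold Cnat. rewrite minus_INR by exact H. apply RtoC_minus. Qed.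

Section DefectSum.
Variables (x : C) (t s : nat -> C) (m : nat).
Hypothesis Hs0 : s 0%nat = 0.
Hypothesis Hst : forall j, (1 <= j <= m)%nat -> s j = t j * x ^ j.

Let sym_term (j : nat) : C := s j * s (S m - j)%nat * (Cnat (S m - j) - Cnat j) ^ 2.

Lemma defect_conv_sym :
  2 * (conv s (sdelta (sdelta s)) (S m) - conv (sdelta s) (sdelta s) (S m))
  = csum sym_term (S (S m)).
Proof.
  set (half := fun j => s j * s (S m - j)%nat *
                 (Cnat (S m - j) * Cnat (S m - j) - Cnat j * Cnat (S m - j))).
  assert (Hhalf : conv s (sdelta (sdelta s)) (S m) - conv (sdelta s) (sdelta s) (S m)
                  = csum half (S (S m))).
  { unfold conv, sdelta. rewrite <- csum_sub. apply csum_ext. intros j _. unfold half. ring. }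
  rewrite Hhalf. transitivity (csum half (S (S m)) + csum (fun j => half (S m - j)%nat) (S (S m))).
  - rewrite csum_rev. ring.
  - rewrite <- csum_add. apply csum_ext. intros j Hj. unfold half, sym_term.
    replace (S m - (S m - j))%nat with j by lia. ring.
Qed.

Lemma defect_sum_scaled_half :
  x ^ S m * defect_sum t (S m)
  = csum (fun j => if Nat.ltb (2 * j) (S m) then sym_term j else 0) (S (S m)).
Proof.
  rewrite csum_S. unfold defect_sum. rewrite <- csum_mult_l.
  destruct (Nat.ltb_spec (2 * S m) (S m)) as [|_]; [lia|]. rewrite Cplus_0_r.
  apply csum_ext. intros j Hj. destruct j as [|j]; [unfold sym_term; rewrite Hs0; simpl; ring|].
  simpl (1 <=? S j). rewrite Bool.andb_true_l.
  destruct (Nat.ltb_spec (2 * S j) (S m)); [|ring].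
  unfold sym_term. rewrite !Hst by lia.
  replace (S m - 2 * S j)%nat with ((S m - S j) - S j)%nat by lia.
  rewrite Cnat_sub by lia.
  replace (x ^ S m) with (x ^ S j * x ^ (S m - S j)) by (rewrite <- Cpow_add_r; f_equal; lia).
  ring.
Qed.

Lemma defect_sum_scaled :
  conv s (sdelta (sdelta s)) (S m) - conv (sdelta s) (sdelta s) (S m)
  = x ^ S m * defect_sum t (S m).
Proof.
  assert (H2 : RtoC 2 <> 0) by (intro H; apply RtoC_inj in H; lra).
  transitivity (2 * (conv s (sdelta (sdelta s)) (S m) - conv (sdelta s) (sdelta s) (S m)) / 2);
    [field; exact H2|].
  rewrite defect_conv_sym, csum_symmetric_half, <- defect_sum_scaled_half; [field; exact H2|..].
  - intros j Hj. unfold sym_term. replace (S m - (S m - j))%nat with j by lia. ring.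
  - intros j Hj. unfold sym_term. replace (S m - j)%nat with j by lia. ring.
Qed.
End DefectSum.

Lemma conv_cube (s : nat -> C) m :
  conv (fun j => delta0 j + s j) (conv (fun j => delta0 j + s j) (fun j => delta0 j + s j)) m
  = delta0 m + 3 * s m + 3 * conv s s m + conv s (conv s s) m.
Proof.
  assert (Hsq : forall j, conv (fun j => delta0 j + s j) (fun j => delta0 j + s j) j
                          = delta0 j + (2 * s j + conv s s j)).
  { intro j. rewrite conv_plus_l, conv_delta0_l, conv_plus_r, conv_delta0_r. ring. }
  rewrite (conv_ext_r _ _ _ _ (fun j _ => Hsq j)).
  rewrite conv_plus_l, conv_delta0_l, !conv_plus_r, conv_delta0_r, conv_scal_r. ring.
Qed.

Lemma u_S (a : C) (m : nat) : u (S m) a = u_step (S m) (u_table m a) a.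
Proof.
  unfold u. change (u_table (S m) a (S m))
    with (if S m <=? m then u_table m a (S m) else u_step (S m) (u_table m a) a).
  now rewrite (proj2 (Nat.leb_gt _ _) (Nat.lt_succ_diag_r m)).
Qed.

Lemma u_table_spec (a : C) (m j : nat) : (1 <= j <= m)%nat -> u_table m a j = u j a.
Proof.
  induction m as [|m IHm]; intro Hj; [lia|]. simpl.
  destruct (Nat.leb_spec j m); [apply IHm; lia|].
  replace j with (S m) by lia. symmetry. apply u_S.
Qed.

Lemma col_sum_next_u (a : C) (m : nat) : a <> 0 -> a ^ 2 + Cnat (S m) ^ 2 <> 0 ->
  col_sum_next (/ a ^ 2) m (fun j => u j a * a ^ (2 * j)) = u (S m) a * a ^ (2 * S m).
Proof.
  intros Ha Han. set (x := a ^ 2). set (t := u_table m a). set (s := fun j => u j a * a ^ (2 * j)).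
  assert (Hs0 : s 0%nat = 0) by (unfold s, u; simpl; ring).
  assert (Hst : forall j, (1 <= j <= m)%nat -> s j = t j * x ^ j)
    by (intros j Hj; unfold s, t, x; rewrite u_table_spec, Cpow_mult_r by exact Hj; easy).
  unfold col_sum_next. rewrite conv_cube, (defect_sum_scaled x t s m Hs0 Hst).
  rewrite u_S, u_step_unfold, Cpow_mult_r. fold x t.
  destruct m as [|m].
  - unfold conv, defect_sum, delta0, Cnat in *. simpl in *. rewrite Hs0.
    unfold x. field. split; [|exact Ha]. intro H. apply Han. rewrite <- H. ring.
  - simpl Nat.eqb. cbv iota. replace (S (S m) - 1)%nat with (S m) by lia.
    rewrite <- (pair_sum_scaled x t s (S m) Hs0 Hst (S (S m)) (S m)) by lia.
    rewrite <- (triple_sum_scaled x t s (S m) Hs0 Hst (S m)) by lia.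
    rewrite (Hst (S m)) by lia. unfold delta0. simpl Nat.eqb. cbv iota.
    change (x ^ S (S m)) with (x * x ^ S m). generalize (x ^ S m). intro P.
    unfold x. field. split; [|exact Ha]. intro H. apply Han. rewrite <- H. ring.
Qed.

Lemma Cmod_Cnat n : Cmod (Cnat n) = INR n.
Proof. unfold Cnat. rewrite Cmod_R. apply Rabs_pos_eq, pos_INR. Qed.

Section LargeModulus.
Variables (a : C) (n : nat).
Hypothesis Ha : (INR n < Cmod a)%R.

Lemma Cmod_gt_INR_neq0 : a <> 0.
Proof. intros ->. rewrite Cmod_0 in Ha. pose proof (pos_INR n). lra. Qed.

Lemma Cnat_sq_div_Cmod_lt_1 : (Cmod (Cnat n ^ 2 * / a ^ 2) < 1)%R.
Proof.
  pose proof (pos_INR n). pose proof Cmod_gt_INR_neq0.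
  rewrite Cmod_mult, Cmod_inv, !Cmod_pow, Cmod_Cnat by (apply Cpow_nz; assumption).
  apply (Rmult_lt_reg_r (Cmod a ^ 2)); [apply pow_lt, Cmod_gt_0; assumption|].
  rewrite Rmult_assoc, Rinv_l, Rmult_1_r, Rmult_1_l by (apply pow_nonzero; lra).
  simpl. nra.
Qed.

Lemma sq_plus_Cnat_sq_neq0 : a ^ 2 + Cnat n ^ 2 <> 0.
Proof.
  intro H. apply (Rlt_irrefl 1).
  rewrite <- Cmod_1 at 1. eapply Rle_lt_trans; [|exact Cnat_sq_div_Cmod_lt_1]. right.
  pose proof Cmod_gt_INR_neq0 as Ha0.
  replace (Cnat n ^ 2 * / a ^ 2) with ((a ^ 2 + Cnat n ^ 2) / a ^ 2 - 1) by (field; exact Ha0).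
  rewrite H. replace (0 / a ^ 2 - 1) with (- (1)) by (field; exact Ha0).
  now rewrite Cmod_opp.
Qed.
End LargeModulus.

Lemma is_gseries_col_u (A : bser) (a : C) (n : nat) : formally_solves A -> (1 <= n)%nat ->
  (INR n < Cmod a)%R -> is_gseries (/ a ^ 2) (col A n) (u n a * a ^ (2 * n)).
Proof.
  intro HA. induction n as [n IH] using lt_wf_ind. intros Hn Ha.
  destruct n as [|m]; [lia|].
  rewrite <- col_sum_next_u
    by first [exact (Cmod_gt_INR_neq0 _ _ Ha) | exact (sq_plus_Cnat_sq_neq0 _ _ Ha)].
  apply is_gseries_col_succ;
    [exact HA | unfold u; simpl; ring | exact (Cnat_sq_div_Cmod_lt_1 _ _ Ha)|].
  intros j Hj. apply IH; [lia | lia|].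
  eapply Rle_lt_trans; [apply le_INR | exact Ha]. lia.
Qed.

Lemma Akn_term_eq (A : bser) (n : nat) (a : C) (k : nat) : a <> 0 ->
  (- RtoC 1) ^ k * Akn A k n / a ^ (2 * k) = col A n k * (/ a ^ 2) ^ k.
Proof.
  intro Ha. unfold Akn, col. rewrite Cpow_mult_r, Cpow_inv by (apply Cpow_nz; exact Ha).
  rewrite Cmult_assoc, <- Cpow_mult_l.
  replace (- RtoC 1 * - RtoC 1) with (RtoC 1) by ring. rewrite Cpow_1_l.
  field. apply Cpow_nz, Cpow_nz. exact Ha.
Qed.

Theorem corollary1 (A : bser) :
  A 0%nat 0%nat = RtoC 0 ->
  holo_disk A ->
  formally_solves A ->
  forall n : nat, (1 <= n)%nat ->
  forall a : C, (INR n < Cmod a)%R ->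
    ex_series (fun k => Cmod ((- RtoC 1) ^ k * Akn A k n / a ^ (2 * k))) /\
    is_series (fun k => (- RtoC 1) ^ k * Akn A k n / a ^ (2 * k)) (u n a * a ^ (2 * n)).
Proof.
  intros _ _ HA n Hn a Ha.
  pose proof (Cmod_gt_INR_neq0 a n Ha) as Ha0.
  destruct (is_gseries_col_u A a n HA Hn Ha) as [Habs Hsum].
  split.
  - eapply ex_series_ext; [|exact Habs]. intro k. simpl. now rewrite Akn_term_eq.
  - eapply is_series_ext; [|exact Hsum]. intro k. simpl. now rewrite Akn_term_eq.
Qed.
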